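(* Consider a stochastic $K$-armed bandit with reward vectors in $[-R_{\max},R_{\max}]^K$ drawn i.i.d. with mean $\mathbf r$ having no ties, optimal arm $a^*$ with deterministic policy $\pi^*$, and $\Delta=\min_{a\ne a'}|r(a)-r(a')|$. Given a horizon $T$ (and target accuracy $\epsilon>0$), choosing the learning rate $\alpha=\mathcal O(T^{-3/7})$ and the barrier parameter $\eta=\mathcal O(T^{1/7})$, LB-SGB (defined in the context) ensures sub-linear regret: $$\mathbb E\Big[\sum_{t=1}^T(\pi^*-\pi_{\boldsymbol\theta_t})^\top\mathbf r\Big]\le\mathcal O\big(\Delta^{-2/7}T^{6/7}\big).$$
   Context: Softmax policy $\pi_{\boldsymbol\theta}(a)=e^{\theta(a)}/\sum_be^{\theta(b)}$. LB-SGB with step size $\alpha$ and barrier parameter $\eta$: start from $\boldsymbol\theta=\mathbf 0$; at round $t$ sample $a_t\sim\pi_{\boldsymbol\theta_t}$, observe $R_t(a_t)$, set $\hat r_t(a)=\mathbb I\{a_t=a\}R_t(a_t)/\pi_{\boldsymbol\theta_t}(a)$ and update $\boldsymbol\theta_{t+1}=\boldsymbol\theta_t+\alpha\big[(\mathrm{diag}(\pi_{\boldsymbol\theta_t})-\pi_{\boldsymbol\theta_t}\pi_{\boldsymbol\theta_t}^\top)\hat{\mathbf r}_t+\frac1\eta(\mathbf 1-K\pi_{\boldsymbol\theta_t})\big]$. The hyperparameters depend on the horizon $T$. *)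

From HB Require Import structures.
From mathcomp Require Import all_boot all_order all_algebra.
From mathcomp Require Import all_classical all_reals all_analysis.
Set Implicit Arguments. Unset Strict Implicit. Unset Printing Implicit Defensive.
Import Order.TTheory GRing.Theory Num.Theory.
Local Open Scope ring_scope.

Section LBSGB.
Context {R : realType} {K : nat}.

Definition softmax (th : 'I_K -> R) (a : 'I_K) : R :=
  expR (th a) / \sum_(b < K) expR (th b).

Definition rhat (th : 'I_K -> R) (at_ : 'I_K) (rew : R) (b : 'I_K) : R :=
  (if at_ == b then rew else 0) / softmax th b.

(* one LB-SGB step:
   theta' = theta + alpha [ (diag pi - pi pi^T) rhat + (1/eta)(1 - K pi) ] *)
Definition lbsgb_step (alpha eta : R) (th : 'I_K -> R) (at_ : 'I_K) (rew : R)
    : 'I_K -> R :=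
  fun a => th a + alpha *
    (softmax th a * rhat th at_ rew a
     - softmax th a * (\sum_(b < K) softmax th b * rhat th at_ rew b)
     + eta^-1 * (1 - K%:R * softmax th a)).

Definition inst_regret (r : 'I_K -> R) (astar : 'I_K) (th : 'I_K -> R) : R :=
  \sum_(a < K) ((if a == astar then 1 else 0) - softmax th a) * r a.

Definition is_min_gap (r : 'I_K -> R) (D : R) : Prop :=
  (forall a a' : 'I_K, a != a' -> D <= `|r a - r a'|) /\
  (exists a a' : 'I_K, a != a' /\ D = `|r a - r a'|).

End LBSGB.

(* Each round draws omega ~ P independently (reward vector (X a omega)_a),
   samples a ~ pi_theta, observes X a omega and updates.
   exp_regret (n+1) th = regret(th) + E_{omega, a ~ pi_th}[exp_regret n th'] *)
Fixpoint exp_regret {R : realType} {K : nat} {d : measure_display}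
    {T : measurableType d} (P : probability T R) (X : 'I_K -> T -> R)
    (r : 'I_K -> R) (astar : 'I_K) (alpha eta : R) (n : nat) (th : 'I_K -> R)
    : \bar R :=
  match n with
  | 0 => 0%E
  | n'.+1 =>
      ((inst_regret r astar th)%:E +
       \int[P]_w (\sum_(a < K) (softmax th a)%:E *
           exp_regret P X r astar alpha eta n'
             (lbsgb_step alpha eta th a (X a w))))%E
  end.

(* LB-SGB is stochastic gradient ascent on the log-barrier objective
   [Phi th = policy_value r th + eta^-1 * \sum_b ln (softmax th b)]: averaged over
   the drawn arm, the update direction is the gradient of [Phi], and it is bounded
   by [Rm + K].  Along a step of sup-norm [delta <= 1/2], [Phi] loses at most
   [(16 Rm + 2 K) delta^2] against its linearisation, so a round increases the
   expected potential by [alpha |grad Phi|^2 - O(alpha^2)].  The barrier makes [Phi]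
   gradient dominated: the instantaneous regret is at most
   [(1 + 8 Rm) eta^2 |grad Phi|^2 + 3 K^2 / eta].  Hence the regret plus
   [B (Rm - Phi)], with [B = (1 + 8 Rm) eta^2 / alpha], grows by at most
   [3 K^2 / eta + O(B alpha^2)] per round, and [eta = T^(1/7)],
   [alpha ~ T^(-3/7)] make every term [O(T^(6/7))].  The gap only enters through
   [Delta <= 2 Rm], which bounds [Delta^(-2/7)] from below. *)

From HB Require Import structures.
From mathcomp Require Import all_boot all_order all_algebra.
From mathcomp Require Import all_classical all_reals all_analysis.
From mathcomp Require Import ring lra.
Import Order.TTheory GRing.Theory Num.Theory.
Local Open Scope ring_scope.

Section ConvexCombination.
Context {R : realType} {I : finType} (p : I -> R).
Hypotheses (p_ge0 : forall i, 0 <= p i) (p_sum1 : \sum_i p i = 1).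

Lemma convex_comb_ge (y : I -> R) (c : R) :
  (forall i, c <= y i) -> c <= \sum_i p i * y i.
Proof.
move=> cy; rewrite -[c]mul1r -p_sum1 mulr_suml.
by apply: ler_sum => i _; rewrite ler_wpM2l.
Qed.

Lemma convex_comb_norm_le (y : I -> R) (c : R) :
  (forall i, `|y i| <= c) -> `|\sum_i p i * y i| <= c.
Proof.
move=> yc; apply: le_trans (ler_norm_sum _ _ _) _.
rewrite -[c]mul1r -p_sum1 mulr_suml; apply: ler_sum => i _.
by rewrite normrM ger0_norm // ler_wpM2l.
Qed.

End ConvexCombination.

Lemma ord_natr_ge1 {R : numDomainType} {K : nat} (i : 'I_K) : 1 <= K%:R :> R.
Proof. by rewrite ler1n (leq_ltn_trans _ (ltn_ord i)). Qed.

Section Softmax.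
Context {R : realType} {K : nat} (i0 : 'I_K).
Implicit Types (th : 'I_K -> R) (r : 'I_K -> R).

Definition partition_fn th : R := \sum_(b < K) expR (th b).

Lemma partition_fn_gt0 th : 0 < partition_fn th.
Proof.
rewrite /partition_fn (bigD1 i0) //= ltr_pwDl ?expR_gt0 //.
by rewrite sumr_ge0 // => b _; exact/ltW/expR_gt0.
Qed.

Lemma softmax_gt0 th a : 0 < softmax th a.
Proof. by rewrite divr_gt0 ?expR_gt0 // (partition_fn_gt0 th). Qed.

Lemma softmax_ge0 th a : 0 <= softmax th a.
Proof. exact/ltW/softmax_gt0. Qed.

Lemma softmax_sum1 th : \sum_(a < K) softmax th a = 1.
Proof. by rewrite -mulr_suml divff // gt_eqF // (partition_fn_gt0 th). Qed.

Lemma softmax_le1 th a : softmax th a <= 1.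
Proof.
rewrite -(softmax_sum1 th) (bigD1 a) //= lerDl.
by rewrite sumr_ge0 // => b _; exact: softmax_ge0.
Qed.

Definition policy_value r th : R := \sum_(a < K) softmax th a * r a.

Lemma policy_value_norm_le r th (Rm : R) :
  (forall a, `|r a| <= Rm) -> `|policy_value r th| <= Rm.
Proof. exact/convex_comb_norm_le/softmax_sum1/softmax_ge0. Qed.

End Softmax.

Lemma inst_regretE {R : realType} {K : nat} (r : 'I_K -> R) (astar : 'I_K)
    (th : 'I_K -> R) :
  inst_regret r astar th = r astar - policy_value r th.
Proof.
rewrite /inst_regret; under eq_bigr do rewrite mulrBl.
rewrite sumrB (bigD1 astar) //= eqxx mul1r big1 ?addr0 // => a /negbTE ->.
by rewrite mul0r.
Qed.

Lemma inst_regret_ge0 {R : realType} {K : nat} (r : 'I_K -> R) (astar : 'I_K)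
    (th : 'I_K -> R) :
  (forall a, r a <= r astar) -> 0 <= inst_regret r astar th.
Proof.
move=> r_max; rewrite inst_regretE subr_ge0 -[r astar]mul1r -(softmax_sum1 astar th).
by rewrite mulr_suml ler_sum // => a _; rewrite ler_wpM2l ?softmax_ge0.
Qed.

Lemma expR_le1Dx_sqr {R : realType} (x : R) : x <= 1/2 -> expR x <= 1 + x + 2 * x ^+ 2.
Proof.
move=> x_le; have ex_gt0 := expR_gt0 x.
have : 1 - x <= (expR x)^-1 by rewrite -expRN; have := expR_ge1Dx (- x); lra.
rewrite -(ler_pM2l ex_gt0) mulfV ?gt_eqF // => ex_le.
have : 0 <= x ^+ 2 * (1 - 2 * x) by rewrite mulr_ge0 ?sqr_ge0 //; lra.
nra.
Qed.

Section Potential.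
Context {R : realType} {K : nat} (i0 : 'I_K).
Implicit Types (th : 'I_K -> R) (r : 'I_K -> R).

Definition log_barrier th : R := \sum_(b < K) ln (softmax th b).

Lemma log_barrierE th :
  log_barrier th = \sum_(b < K) th b - K%:R * ln (partition_fn th).
Proof.
have Z_gt0 := partition_fn_gt0 i0 th.
have -> : K%:R * ln (partition_fn th) = \sum_(b < K) ln (partition_fn th).
  by rewrite sumr_const card_ord mulr_natl.
rewrite -sumrB; apply: eq_bigr => b _.
by rewrite /softmax -/(partition_fn th) lnM ?posrE ?invr_gt0 ?expR_gt0 // lnV ?expRK.
Qed.

Lemma log_barrier_le0 th : log_barrier th <= 0.
Proof.
by rewrite /log_barrier sumr_le0 // => b _; rewrite ln_le0 // (softmax_le1 i0).
Qed.

Lemma log_barrier0 : log_barrier (fun=> 0) = - (K%:R * ln K%:R).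
Proof.
rewrite log_barrierE big1 // sub0r /partition_fn expR0.
by rewrite sumr_const card_ord.
Qed.

Definition lb_objective (eta : R) r th : R :=
  policy_value r th + eta^-1 * log_barrier th.

Definition lb_grad (eta : R) r th (b : 'I_K) : R :=
  softmax th b * (r b - policy_value r th) + eta^-1 * (1 - K%:R * softmax th b).

End Potential.

Section PotentialBounds.
Context {R : realType} {K : nat} (i0 : 'I_K) (r : 'I_K -> R) (Rm eta : R).
Hypothesis r_le : forall b, `|r b| <= Rm.

Lemma lb_objective_le th : 0 < eta -> lb_objective eta r th <= Rm.
Proof.
move=> eta_gt0; have := policy_value_norm_le i0 _ th _ r_le; rewrite ler_norml.
have ie_ge0 : 0 <= eta^-1 by rewrite invr_ge0 ltW.
have := ler_wpM2l ie_ge0 (log_barrier_le0 i0 th).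
by rewrite /lb_objective mulr0 => ? /andP[_ ?]; lra.
Qed.

Lemma lb_objective0_ge : 1 <= eta -> - Rm - K%:R ^+ 2 <= lb_objective eta r (fun=> 0).
Proof.
move=> eta_ge1; have := policy_value_norm_le i0 _ (fun=> 0) _ r_le; rewrite ler_norml.
move=> /andP[J_ge _]; rewrite /lb_objective (log_barrier0 i0).
have K_ge1 : 1 <= K%:R :> R := ord_natr_ge1 i0.
have lnK_le : K%:R * ln K%:R <= K%:R ^+ 2 :> R.
  by rewrite expr2 ler_wpM2l // ltW // ln_sublinear //; lra.
have : 0 <= K%:R * ln K%:R :> R by rewrite mulr_ge0 ?ln_ge0 //; lra.
have ie_gt0 : 0 < eta^-1 by rewrite invr_gt0; lra.
have ie_le1 : eta^-1 <= 1 by rewrite invf_le1 //; lra.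
rewrite mulrN; nra.
Qed.

End PotentialBounds.

Section Smoothness.
Context {R : realType} {K : nat} (i0 : 'I_K).
Variables (th d : 'I_K -> R) (del : R).
Hypotheses (d_le : forall b, `|d b| <= del) (del_le : del <= 1/2).

Let p := softmax th.
Let p_ge0 b : 0 <= p b. Proof. exact: softmax_ge0. Qed.
Let p_sum1 : \sum_(b < K) p b = 1. Proof. exact: softmax_sum1. Qed.

(* [D] is the factor by which the partition function grows and [u] the
   second-order remainder of [expR] at [d]. *)
Let D := \sum_(b < K) p b * expR (d b).
Let u b := expR (d b) - 1 - d b.

Let del_ge0 : 0 <= del. Proof. exact: le_trans (normr_ge0 _) (d_le i0). Qed.

Let u_bounds b : 0 <= u b <= 2 * del ^+ 2.
Proof.
have := d_le b; rewrite ler_norml => /andP[d_ge d_le'].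
have d2_le : d b ^+ 2 <= del ^+ 2.
  by rewrite -real_normK ?num_real // ler_sqr ?nnegrE ?normr_ge0 // d_le.
have : d b <= 1/2 by have := del_le; lra.
move/expR_le1Dx_sqr; have := expR_ge1Dx (d b).
by rewrite /u => ? ?; apply/andP; split; lra.
Qed.

Let DB1 : D - 1 = \sum_(b < K) p b * d b + \sum_(b < K) p b * u b.
Proof.
rewrite -big_split -[X in _ - X]p_sum1 -sumrB /=.
by apply: eq_bigr => b _; rewrite /u; ring.
Qed.

Let DB1_le : `|D - 1| <= 2 * del.
Proof.
rewrite DB1 -big_split /=; under eq_bigr do rewrite -mulrDr.
apply: convex_comb_norm_le => // b; apply: le_trans (ler_normD _ _) _.
have /andP[u_ge0 u_le] := u_bounds b; rewrite (ger0_norm u_ge0).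
have := d_le b; have := del_le; have := del_ge0; nra.
Qed.

Let D_ge : 1/2 <= D.
Proof.
apply: convex_comb_ge => // b; have := expR_ge1Dx (d b); have := d_le b.
by rewrite ler_norml => /andP[? _]; have := del_le; lra.
Qed.

Let D_gt0 : 0 < D. Proof. by have := D_ge; lra. Qed.

Lemma partition_fn_shift :
  partition_fn (fun b => th b + d b) = partition_fn th * D.
Proof.
rewrite /partition_fn /D mulr_sumr; apply: eq_bigr => b _.
have := partition_fn_gt0 i0 th; rewrite /partition_fn => Z_gt0.
by rewrite expRD /p /softmax; field; rewrite gt_eqF.
Qed.

Lemma softmax_shift b :
  softmax (fun b => th b + d b) b = p b * expR (d b) / D.
Proof.
rewrite [LHS]/softmax -/(partition_fn _) partition_fn_shift expRD /p /softmax.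
have := partition_fn_gt0 i0 th; rewrite /partition_fn => Z_gt0.
by field; rewrite !gt_eqF.
Qed.

Lemma policy_value_shift_ge (r : 'I_K -> R) (Rm : R) :
  (forall b, `|r b| <= Rm) ->
  policy_value r th + \sum_(b < K) p b * (r b - policy_value r th) * d b
    - 16 * Rm * del ^+ 2 <= policy_value r (fun b => th b + d b).
Proof.
move=> r_le; set J := policy_value r th.
set P1 := \sum_(b < K) _; set U := \sum_(b < K) p b * (u b * (r b - J)).
have rJ_le b : `|r b - J| <= 2 * Rm.
  apply: le_trans (ler_normB _ _) _.
  by have := r_le b; have := policy_value_norm_le i0 _ th _ r_le; lra.
have U_le : `|U| <= 4 * Rm * del ^+ 2.
  apply: convex_comb_norm_le => // b; rewrite normrM.
  have /andP[u_ge0 u_le] := u_bounds b; rewrite (ger0_norm u_ge0).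
  have := rJ_le b; have := normr_ge0 (r b - J); nra.
have P1_le : `|P1| <= 2 * Rm * del.
  rewrite /P1; under eq_bigr do rewrite -mulrA.
  apply: convex_comb_norm_le => // b; rewrite normrM.
  have := rJ_le b; have := d_le b.
  have := normr_ge0 (r b - J); have := normr_ge0 (d b); nra.
have centered : \sum_(b < K) p b * (r b - J) = 0.
  under eq_bigr do rewrite mulrBr.
  by rewrite sumrB -mulr_suml p_sum1 mul1r subrr.
have shiftE : policy_value r (fun b => th b + d b) = J + (P1 + U) / D.
  rewrite -[J](mulfK (_ : D != 0)); last by rewrite gt_eqF.
  rewrite -mulrDl /policy_value; under eq_bigr do rewrite softmax_shift.
  under eq_bigr do rewrite mulrAC; rewrite -mulr_suml; congr (_ / D).
  rewrite /D mulr_sumr /P1 /U -!big_split /=.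
  apply/eqP; rewrite -subr_eq0 -sumrB; apply/eqP; rewrite -[RHS]centered.
  by apply: eq_bigr => b _; rewrite /u; ring.
rewrite shiftE.
suff : `|(P1 + U) / D - P1| <= 16 * Rm * del ^+ 2.
  by rewrite ler_norml => /andP[? _]; lra.
have -> : (P1 + U) / D - P1 = (U - P1 * (D - 1)) / D by field; rewrite gt_eqF.
rewrite normf_div (gtr0_norm D_gt0) ler_pdivrMr //.
apply: le_trans (ler_normB _ _) _; rewrite normrM.
have := ler_pM (normr_ge0 _) (normr_ge0 _) P1_le DB1_le.
have : 0 <= Rm * del ^+ 2 by have := normr_ge0 U; lra.
have := D_ge; nra.
Qed.

Lemma log_barrier_shift_ge :
  log_barrier th + \sum_(b < K) (1 - K%:R * p b) * d b - 2 * K%:R * del ^+ 2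
    <= log_barrier (fun b => th b + d b).
Proof.
rewrite !(log_barrierE i0) partition_fn_shift.
rewrite lnM ?posrE ?(partition_fn_gt0 i0) ?D_gt0 //.
have lnD_le : ln D <= \sum_(b < K) p b * d b + 2 * del ^+ 2.
  rewrite -[D](subrKC 1) (le_trans (le_ln1Dx _)) //; first by have := D_ge; lra.
  rewrite DB1 lerD2l (le_trans (ler_norm _)) //.
  apply: convex_comb_norm_le => // b.
  by have /andP[u_ge0 u_le] := u_bounds b; rewrite ger0_norm.
have -> : \sum_(b < K) (1 - K%:R * p b) * d b
    = \sum_(b < K) d b - K%:R * \sum_(b < K) p b * d b.
  rewrite mulr_sumr -sumrB; apply: eq_bigr => b _; ring.
rewrite big_split /=; have : 0 <= K%:R :> R by []; nra.
Qed.

Lemma lb_objective_shift_ge (eta : R) (r : 'I_K -> R) (Rm : R) :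
  1 <= eta -> (forall b, `|r b| <= Rm) ->
  lb_objective eta r th + \sum_(b < K) lb_grad eta r th b * d b
    - (16 * Rm + 2 * K%:R) * del ^+ 2
    <= lb_objective eta r (fun b => th b + d b).
Proof.
move=> eta_ge1 r_le; rewrite /lb_objective.
have := policy_value_shift_ge _ _ r_le; have := log_barrier_shift_ge.
have ie_gt0 : 0 < eta^-1 by rewrite invr_gt0; lra.
have ie_le1 : eta^-1 <= 1 by rewrite invf_le1 //; lra.
have -> : \sum_(b < K) lb_grad eta r th b * d b =
    \sum_(b < K) p b * (r b - policy_value r th) * d b
    + eta^-1 * \sum_(b < K) (1 - K%:R * p b) * d b.
  rewrite mulr_sumr -big_split /=; apply: eq_bigr => b _; rewrite /lb_grad /p; ring.
move=> lb_ge J_ge.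
have := ler_wpM2l (ltW ie_gt0) lb_ge.
have : 0 <= (1 - eta^-1) * (2 * K%:R * del ^+ 2).
  by rewrite mulr_ge0 ?mulr_ge0 ?sqr_ge0 //; lra.
nra.
Qed.

End Smoothness.

Section GradientEstimate.
Context {R : realType} {K : nat} (i0 : 'I_K).
Implicit Types (th : 'I_K -> R) (x : R).

Definition grad_estimate (eta : R) th (a : 'I_K) x (b : 'I_K) : R :=
  ((a == b)%:R - softmax th b) * x + eta^-1 * (1 - K%:R * softmax th b).

Lemma lbsgb_stepE (alpha eta : R) th a x :
  lbsgb_step alpha eta th a x = (fun b => th b + alpha * grad_estimate eta th a x b).
Proof.
have softmax_rhat b : softmax th b * rhat th a x b = (a == b)%:R * x.
  rewrite /rhat mulrCA mulfV ?mulr1 ?(gt_eqF (softmax_gt0 i0 th b)) //.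
  by case: (a == b); rewrite ?mul1r ?mul0r.
apply/funext => b; rewrite /lbsgb_step /grad_estimate softmax_rhat.
under eq_bigr do rewrite softmax_rhat.
rewrite (bigD1 a) //= eqxx mul1r big1 ?addr0; first by congr (_ + _ * _); ring.
by move=> c; rewrite eq_sym => /negbTE ->; rewrite mul0r.
Qed.

Lemma grad_estimate_norm_le (eta : R) th a x b (Rm : R) :
  1 <= eta -> `|x| <= Rm -> `|grad_estimate eta th a x b| <= Rm + K%:R.
Proof.
move=> eta_ge1 x_le; rewrite /grad_estimate.
have p_ge0 := softmax_ge0 i0 th b; have p_le1 := softmax_le1 i0 th b.
have K_ge1 : 1 <= K%:R :> R := ord_natr_ge1 i0.
have ie_gt0 : 0 < eta^-1 by rewrite invr_gt0; lra.
have ie_le1 : eta^-1 <= 1 by rewrite invf_le1 //; lra.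
apply: le_trans (ler_normD _ _) _; apply: lerD; rewrite normrM.
- have : `|(a == b)%:R - softmax th b| <= 1.
    by rewrite ler_norml; case: (a == b) => /=; lra.
  by have := normr_ge0 x; have := normr_ge0 ((a == b)%:R - softmax th b); nra.
- have : `|1 - K%:R * softmax th b| <= K%:R by rewrite ler_norml; nra.
  by rewrite gtr0_norm //; have := normr_ge0 (1 - K%:R * softmax th b); nra.
Qed.

Lemma grad_estimate_unbiased (eta : R) th (v x : 'I_K -> R) :
  \sum_(a < K) softmax th a * \sum_(b < K) v b * grad_estimate eta th a (x a) b
    = \sum_(b < K) v b * lb_grad eta x th b.
Proof.
under eq_bigr do rewrite mulr_sumr.
rewrite exchange_big /=; apply: eq_bigr => b _.
set p := softmax th; set c := eta^-1 * (1 - K%:R * p b).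
transitivity
  (v b * \sum_(a < K) (p a * x a * (a == b)%:R - p b * (p a * x a) + c * p a)).
  by rewrite mulr_sumr; apply: eq_bigr => a _; rewrite /grad_estimate /c /p; ring.
rewrite !big_split /= sumrN -!mulr_sumr (softmax_sum1 i0) (bigD1 b) //= eqxx big1.
  by rewrite /lb_grad /policy_value /c -/p /=; ring.
by move=> a /negbTE ->; rewrite mulr0.
Qed.

Lemma lb_grad_inner_affine (eta : R) th (v : 'I_K -> R) (k0 k1 : R) :
  exists (c0 : R) (c : 'I_K -> R), forall x : 'I_K -> R,
    k0 - k1 * \sum_(b < K) v b * lb_grad eta x th b = c0 + \sum_(a < K) c a * x a.
Proof.
set p := softmax th; set S := \sum_(b < K) v b * p b.
pose c b := eta^-1 * (1 - K%:R * p b).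
exists (k0 - k1 * \sum_(b < K) v b * c b), (fun a => - k1 * p a * (v a - S)) => x.
set m := \sum_(a < K) p a * x a; set Sx := \sum_(b < K) v b * p b * x b.
have gradE : \sum_(b < K) v b * lb_grad eta x th b = Sx - S * m + \sum_(b < K) v b * c b.
  rewrite /S mulr_suml -sumrB -big_split /=; apply: eq_bigr => b _.
  by rewrite /lb_grad /policy_value -/p -/m /c; ring.
have coefE : \sum_(a < K) - k1 * p a * (v a - S) * x a = - k1 * (Sx - S * m).
  rewrite /Sx /m mulr_sumr -sumrB mulr_sumr; apply: eq_bigr => a _; ring.
by rewrite gradE coefE; ring.
Qed.

End GradientEstimate.

Lemma inst_regret_le_grad {R : realType} {K : nat} (r : 'I_K -> R) (astar : 'I_K)
    (th : 'I_K -> R) (Rm eta : R) :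
  (forall b, `|r b| <= Rm) -> (forall a, r a <= r astar) -> 1 <= eta ->
  inst_regret r astar th <=
    (1 + 8 * Rm) * eta ^+ 2 * \sum_(b < K) lb_grad eta r th b ^+ 2
    + 3 * K%:R ^+ 2 / eta.
Proof.
move=> r_le r_max eta_ge1.
have rho_ge0 := inst_regret_ge0 _ _ th r_max; rewrite inst_regretE in rho_ge0 *.
have rho_le : r astar - policy_value r th <= 2 * Rm.
  have := policy_value_norm_le astar _ th _ r_le; have := r_le astar.
  by rewrite !ler_norml => /andP[? ?] /andP[? ?]; lra.
have g_le : lb_grad eta r th astar ^+ 2 <= \sum_(b < K) lb_grad eta r th b ^+ 2.
  by rewrite (bigD1 astar) //= lerDl sumr_ge0 // => b _; exact: sqr_ge0.
have gE : lb_grad eta r th astar = softmax th astar * (r astar - policy_value r th)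
  + eta^-1 * (1 - K%:R * softmax th astar) by [].
move: rho_ge0 rho_le g_le gE; set rho := r astar - _; set g := lb_grad _ _ _ astar.
set pi := softmax th astar; set ie := eta^-1 => rho_ge0 rho_le g_le gE.
have pi_gt0 : 0 < pi := softmax_gt0 astar th astar.
have pi_le1 : pi <= 1 := softmax_le1 astar th astar.
have ie_gt0 : 0 < ie by rewrite invr_gt0; lra.
have ie_le1 : ie <= 1 by rewrite invf_le1 //; lra.
have eta_ie : eta * ie = 1 by rewrite mulfV // gt_eqF //; lra.
have K_ge1 : 1 <= K%:R :> R := ord_natr_ge1 astar.
have Rm_ge0 : 0 <= Rm by lra.
suff : rho <= (1 + 8 * Rm) * eta ^+ 2 * g ^+ 2 + 3 * K%:R ^+ 2 * ie.
  move/le_trans; apply; rewrite lerD2r ler_wpM2l //.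
  by rewrite mulr_ge0 ?sqr_ge0 //; lra.
rewrite -mulrA -exprMn.
have : 0 <= Rm * (eta * g) ^+ 2 by rewrite mulr_ge0 ?sqr_ge0.
case: (lerP 1 (2 * K%:R * pi)) => [pi_large | pi_small].
- (* [eta * ie = 1] makes [2 K g <= (eta g)^2 + K^2 ie^2] an instance of AM-GM. *)
  have amgm : 2 * K%:R * g <= (eta * g) ^+ 2 + K%:R ^+ 2 * ie ^+ 2.
    have := sqr_ge0 (eta * g - K%:R * ie).
    have -> : (eta * g - K%:R * ie) ^+ 2
      = (eta * g) ^+ 2 - 2 * K%:R * g * (eta * ie) + K%:R ^+ 2 * ie ^+ 2 by ring.
    by rewrite eta_ie; lra.
  have ie2_le : K%:R ^+ 2 * ie ^+ 2 <= K%:R ^+ 2 * ie.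
    by rewrite ler_wpM2l ?sqr_ge0 // expr2 ler_piMl // ltW.
  have : rho <= 2 * K%:R * pi * rho by nra.
  have : ie * (K%:R * pi - 1) <= ie * K%:R by rewrite ler_wpM2l //; nra.
  nra.
- have g_ge : ie / 2 <= g.
    have : 0 <= pi * rho by rewrite mulr_ge0 //; lra.
    nra.
  have : 1 / 2 <= eta * g.
    by have := ler_wpM2l (_ : 0 <= eta) g_ge; rewrite mulrA eta_ie; apply; lra.
  move=> eg_ge; have : 1 / 4 <= (eta * g) ^+ 2 by rewrite expr2; nra.
  move/(ler_wpM2l Rm_ge0); nra.
Qed.

Lemma lb_objective_step_ge {R : realType} {K : nat} (r th : 'I_K -> R) (a : 'I_K)
    (x Rm alpha eta : R) :
  (forall b, `|r b| <= Rm) -> 1 <= eta -> 0 < alpha ->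
  alpha * (Rm + K%:R) <= 1/2 -> `|x| <= Rm ->
  lb_objective eta r th
    + alpha * \sum_(b < K) lb_grad eta r th b * grad_estimate eta th a x b
    - (16 * Rm + 2 * K%:R) * (alpha * (Rm + K%:R)) ^+ 2
    <= lb_objective eta r (lbsgb_step alpha eta th a x).
Proof.
move=> r_le eta_ge1 alpha_gt0 step_le x_le; rewrite (lbsgb_stepE a).
have d_le b : `|alpha * grad_estimate eta th a x b| <= alpha * (Rm + K%:R).
  by rewrite normrM gtr0_norm // ler_wpM2l ?(ltW alpha_gt0) //; exact: grad_estimate_norm_le.
apply: le_trans (lb_objective_shift_ge a _ _ _ d_le step_le _ _ _ eta_ge1 r_le).
by rewrite mulr_sumr; under [X in _ + X - _ <= _]eq_bigr do rewrite mulrCA.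
Qed.

(* No measurability is needed: the integral of a nonnegative function is a
   supremum over the simple functions below it. *)
Lemma ge0_le_integralT {R : realType} {d : measure_display} {T : measurableType d}
    (mu : {measure set T -> \bar R}) (f g : T -> \bar R) :
  (forall x, 0 <= f x)%E -> (forall x, f x <= g x)%E ->
  (\int[mu]_x f x <= \int[mu]_x g x)%E.
Proof.
move=> f_ge0 fg; have g_ge0 x : (0 <= g x)%E := le_trans (f_ge0 x) (fg x).
rewrite !ge0_integralTE //; apply: ereal_sup_le => _ [h hf <-].
by exists h => // x; apply: le_trans (hf x) (fg x).
Qed.

Section BoundedRewards.
Context {R : realType} {K : nat} (d : measure_display) (T : measurableType d).
Variables (P : probability T R) (X : 'I_K -> T -> R) (r : 'I_K -> R) (Rm : R).
Hypotheses (X_meas : forall a, measurable_fun setT (X a))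
  (X_le : forall a w, `|X a w| <= Rm)
  (X_mean : forall a, (\int[P]_w (X a w)%:E = (r a)%:E)%E).

Let X_int a : P.-integrable setT (EFin \o X a).
Proof.
apply: measurable_bounded_integrable => //.
  by rewrite (le_lt_trans (probability_le1 _ _)) ?ltry.
by exists Rm; split => [|M RmM w _]; [exact: num_real|exact: le_trans (X_le a w) (ltW RmM)].
Qed.

Lemma integral_affine (c0 : R) (c : 'I_K -> R) :
  (\int[P]_w (c0 + \sum_(a < K) c a * X a w)%:E = (c0 + \sum_(a < K) c a * r a)%:E)%E.
Proof.
have cX_int a : P.-integrable setT (fun w => (c a * X a w)%:E).
  by apply: eq_integrable (integrableZl measurableT (c a) (X_int a)) => // w _.
under eq_integral do rewrite EFinD -sumEFin.
rewrite integralD //; last 2 first.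
- exact: finite_measure_integrable_cst.
- exact: integrable_sum.
rewrite integral_cst // [X in (_ * X)%E]probability_setT mule1 integral_sum //.
rewrite EFinD -sumEFin; congr (_ + _)%E; apply: eq_bigr => a _.
under eq_integral do rewrite EFinM.
by rewrite integralZl ?X_mean ?EFinM //; exact: X_int.
Qed.

Lemma mean_reward_norm_le a : `|r a| <= Rm.
Proof.
rewrite -lee_fin -abse_EFin -(X_mean a).
apply: le_trans (le_abse_integral _ measurableT _) _.
  exact/measurable_realfun.measurable_EFinP.
apply: le_trans (ge0_le_integralT P (fun w => `|(X a w)%:E|%E) (fun=> Rm%:E) _ _) _.
- by move=> w; exact: abse_ge0.
- by move=> w; rewrite lee_fin; exact: X_le.
by rewrite integral_cst // [X in (_ * X)%E]probability_setT mule1.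
Qed.

End BoundedRewards.

Arguments integral_affine {R K d T P X r Rm}.
Arguments mean_reward_norm_le {R K d T P X r Rm}.

Section RegretAnalysis.
Context {R : realType} {K : nat} (d : measure_display) (T : measurableType d).
Variables (P : probability T R) (X : 'I_K -> T -> R) (r : 'I_K -> R) (astar : 'I_K).
Variables (Rm alpha eta : R).
Hypotheses (X_meas : forall a, measurable_fun setT (X a))
  (X_le : forall a w, `|X a w| <= Rm)
  (X_mean : forall a, (\int[P]_w (X a w)%:E = (r a)%:E)%E)
  (r_max : forall a, r a <= r astar).

Let regret := exp_regret P X r astar alpha eta.

Lemma exp_regret_ge0 n th : (0 <= regret n th)%E.
Proof.
elim: n th => [|n IH] th //=; apply: adde_ge0; first by rewrite lee_fin inst_regret_ge0.
apply: integral_ge0 => w _; apply: sume_ge0 => a _.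
by rewrite mule_ge0 ?lee_fin ?(softmax_ge0 astar).
Qed.

Hypotheses (eta_ge1 : 1 <= eta) (alpha_gt0 : 0 < alpha)
  (step_le : alpha * (Rm + K%:R) <= 1/2).

(* [B] weighs the potential so that its expected increase pays for the regret
   (gradient domination); [A] collects the per-round error terms. *)
Let B := (1 + 8 * Rm) * eta ^+ 2 / alpha.
Let A := 3 * K%:R ^+ 2 / eta + B * (16 * Rm + 2 * K%:R) * (alpha * (Rm + K%:R)) ^+ 2.

Let r_le := mean_reward_norm_le X_meas X_le X_mean.

Let B_ge0 : 0 <= B.
Proof.
have Rm_ge0 : 0 <= Rm by apply: le_trans (r_le astar).
by rewrite divr_ge0 ?(ltW alpha_gt0) // mulr_ge0 ?sqr_ge0 //; lra.
Qed.

Let BalphaE : B * alpha = (1 + 8 * Rm) * eta ^+ 2.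
Proof. by rewrite divfK ?gt_eqF. Qed.

Lemma expected_next_regret_le n th :
  (forall th', regret n th' <= (A * n%:R + B * (Rm - lb_objective eta r th'))%:E)%E ->
  (\int[P]_w (\sum_(a < K) (softmax th a)%:E *
      regret n (lbsgb_step alpha eta th a (X a w)))
    <= (A * n%:R + B * (Rm - lb_objective eta r th)
        + B * (16 * Rm + 2 * K%:R) * (alpha * (Rm + K%:R)) ^+ 2
        - B * alpha * \sum_(b < K) lb_grad eta r th b ^+ 2)%:E)%E.
Proof.
move=> IH; set g := lb_grad eta r th.
set K0 := A * n%:R + B * (Rm - lb_objective eta r th)
  + B * (16 * Rm + 2 * K%:R) * (alpha * (Rm + K%:R)) ^+ 2.
have next_le a w : (regret n (lbsgb_step alpha eta th a (X a w))
    <= (K0 - B * alpha * \sum_(b < K) g b * grad_estimate eta th a (X a w) b)%:E)%E.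
  apply: le_trans (IH _) _; rewrite lee_fin.
  have := lb_objective_step_ge _ th a _ _ _ _ r_le eta_ge1 alpha_gt0 step_le (X_le a w).
  move/(ler_wpM2l B_ge0); rewrite /K0 -/g; nra.
have [c0 [c affE]] := lb_grad_inner_affine eta th g K0 (B * alpha).
have avg_le w : (\sum_(a < K) (softmax th a)%:E * regret n (lbsgb_step alpha eta th a (X a w))
    <= (c0 + \sum_(a < K) c a * X a w)%:E)%E.
  apply: le_trans (_ : _ <= \sum_(a < K) (softmax th a)%:E *
      (K0 - B * alpha * \sum_(b < K) g b * grad_estimate eta th a (X a w) b)%:E)%E _.
    apply: lee_sum => a _; apply: lee_wpmul2l (next_le a w).
    by rewrite lee_fin (softmax_ge0 astar).
  under eq_bigr do rewrite -EFinM; rewrite sumEFin lee_fin -affE.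
  under eq_bigr do rewrite mulrBr mulrCA.
  rewrite sumrB -mulr_suml -mulr_sumr (softmax_sum1 astar) mul1r.
  by rewrite (grad_estimate_unbiased astar eta th g (fun a => X a w)).
have -> : \sum_(b < K) g b ^+ 2 = \sum_(b < K) g b * lb_grad eta r th b.
  by apply: eq_bigr => b _; rewrite expr2.
rewrite affE -(integral_affine X_meas X_le X_mean); apply: ge0_le_integralT avg_le.
move=> w; apply: sume_ge0 => a _.
by rewrite mule_ge0 ?lee_fin ?(softmax_ge0 astar) ?exp_regret_ge0.
Qed.

Lemma exp_regret_le_potential n th :
  (regret n th <= (A * n%:R + B * (Rm - lb_objective eta r th))%:E)%E.
Proof.
elim: n th => [|n IH] th.
  rewrite /= mulr0 add0r lee_fin mulr_ge0 // subr_ge0 (lb_objective_le astar) //.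
  exact: lt_le_trans ltr01 eta_ge1.
rewrite /regret /=; apply: le_trans (leeD (lexx _) (expected_next_regret_le n th IH)) _.
rewrite -EFinD lee_fin.
have := inst_regret_le_grad _ _ th _ _ r_le r_max eta_ge1; rewrite -BalphaE.
rewrite /A -natr1; lra.
Qed.

Lemma exp_regret_le n :
  (regret n (fun=> 0%R) <= (A * n%:R + B * (2 * Rm + K%:R ^+ 2))%:E)%E.
Proof.
apply: le_trans (exp_regret_le_potential n _) _; rewrite lee_fin lerD2l.
by rewrite ler_wpM2l //; have := lb_objective0_ge astar _ _ _ r_le eta_ge1; lra.
Qed.

End RegretAnalysis.

Arguments exp_regret_le {R K d T P X r astar Rm alpha eta}.

(* The constant of [exp_regret_le] for [eta = s], [alpha = 1 / (2 (Rm + K) s^3)]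
   and [s^7] rounds, in front of [s^6]. *)
Definition lbsgb_rate_const {R : realType} (K : nat) (Rm : R) : R :=
  3 * K%:R ^+ 2 + (Rm + K%:R) * (1 + 8 * Rm)
    * ((16 * Rm + 2 * K%:R) / 2 + 2 * (2 * Rm + K%:R ^+ 2)).

Lemma lbsgb_rate_const_gt0 {R : realType} (K : nat) (Rm : R) :
  (0 < K)%N -> 0 <= Rm -> 0 < lbsgb_rate_const K Rm.
Proof.
move=> K_gt0 Rm_ge0; have K_ge1 : 1 <= K%:R :> R by rewrite ler1n.
have K2_ge0 : 0 <= K%:R ^+ 2 :> R := sqr_ge0 _.
rewrite /lbsgb_rate_const ltr_pwDl ?mulr_gt0 ?exprn_gt0 //; try lra.
by rewrite !mulr_ge0 //; lra.
Qed.

Lemma tuned_rate_le {R : realType} (K : nat) (Rm s alpha B : R) :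
  (0 < K)%N -> 0 <= Rm -> 1 <= s ->
  alpha = (2 * (Rm + K%:R))^-1 / s ^+ 3 -> B = (1 + 8 * Rm) * s ^+ 2 / alpha ->
  (3 * K%:R ^+ 2 / s + B * (16 * Rm + 2 * K%:R) * (alpha * (Rm + K%:R)) ^+ 2) * s ^+ 7
    + B * (2 * Rm + K%:R ^+ 2) <= lbsgb_rate_const K Rm * s ^+ 6.
Proof.
move=> K_gt0 Rm_ge0 s_ge1 alpha_def B_def.
have K_ge1 : 1 <= K%:R :> R by rewrite ler1n.
set G := Rm + K%:R; have G_gt0 : 0 < G by rewrite /G; lra.
have s_gt0 : 0 < s by lra.
have BE : B = 2 * G * (1 + 8 * Rm) * s ^+ 5.
  by rewrite B_def alpha_def /G; field; rewrite !gt_eqF ?exprn_gt0 //; lra.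
have deltaE : alpha * G = (2 * s ^+ 3)^-1.
  by rewrite alpha_def /G; field; rewrite !gt_eqF ?exprn_gt0 //; lra.
rewrite BE deltaE /lbsgb_rate_const -/G.
set c := 2 * G * (1 + 8 * Rm) * (2 * Rm + K%:R ^+ 2).
have -> : (3 * K%:R ^+ 2 / s + 2 * G * (1 + 8 * Rm) * s ^+ 5 * (16 * Rm + 2 * K%:R)
    * (2 * s ^+ 3)^-1 ^+ 2) * s ^+ 7
    = (3 * K%:R ^+ 2 + G * (1 + 8 * Rm) * ((16 * Rm + 2 * K%:R) / 2)) * s ^+ 6.
  by field; rewrite gt_eqF.
have -> : 2 * G * (1 + 8 * Rm) * s ^+ 5 * (2 * Rm + K%:R ^+ 2) = c * s ^+ 5.
  by rewrite /c; ring.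
have c_ge0 : 0 <= c by rewrite /c !mulr_ge0 ?addr_ge0 ?exprn_ge0 //; lra.
have : c * s ^+ 5 <= c * s ^+ 6.
  by rewrite ler_wpM2l // [s ^+ 6]exprSr ler_peMr // exprn_ge0 // ltW.
rewrite /c; lra.
Qed.

Lemma exp_regret_tuned_le {R : realType} {K : nat} {d : measure_display}
    {T : measurableType d} {P : probability T R} {X : 'I_K -> T -> R}
    {r : 'I_K -> R} {astar : 'I_K} {Rm : R} {Th : nat} :
  (forall a, measurable_fun setT (X a)) -> (forall a w, `|X a w| <= Rm) ->
  (forall a, (\int[P]_w (X a w)%:E = (r a)%:E)%E) ->
  (forall a, r a <= r astar) -> (1 <= Th)%N ->
  (exp_regret P X r astar ((2 * (Rm + K%:R))^-1 * Th%:R `^ (- (3 / 7)))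
      (Th%:R `^ (1 / 7)) Th (fun=> 0%R)
    <= (lbsgb_rate_const K Rm * Th%:R `^ (6 / 7))%:E)%E.
Proof.
move=> X_meas X_le X_mean r_max Th_ge1.
have K_gt0 : (0 < K)%N := leq_ltn_trans (leq0n _) (ltn_ord astar).
have K_ge1 : 1 <= K%:R :> R := ord_natr_ge1 astar.
have Rm_ge0 : 0 <= Rm := le_trans (normr_ge0 _) (mean_reward_norm_le X_meas X_le X_mean astar).
set s := Th%:R `^ (1 / 7).
have pow7 k : Th%:R `^ (k%:R / 7) = s ^+ k.
  by rewrite -powR_mulrn ?powR_ge0 // -powRrM; congr (_ `^ _); ring.
have ThE : Th%:R = s ^+ 7 by rewrite -pow7 divff ?powRr1 ?pnatr_eq0.
have s_ge1 : 1 <= s.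
  have one_pow : (1 : R) `^ (1 / 7) = 1 by rewrite powR1.
  by rewrite -{1}one_pow ge0_ler_powR ?nnegrE ?ler1n //; lra.
have s3_gt0 : 0 < s ^+ 3 by rewrite exprn_gt0 //; lra.
rewrite powRN (pow7 3) (pow7 6).
set alpha := (2 * (Rm + K%:R))^-1 / _.
have alpha_gt0 : 0 < alpha by rewrite mulr_gt0 ?invr_gt0 //; lra.
have step_le : alpha * (Rm + K%:R) <= 1 / 2.
  have -> : alpha * (Rm + K%:R) = (2 * s ^+ 3)^-1.
    by rewrite /alpha; field; rewrite !gt_eqF //; lra.
  have : 1 <= s ^+ 3 by rewrite exprn_ege1.
  by rewrite div1r lef_pV2 ?posrE //; lra.
apply: le_trans (exp_regret_le X_meas X_le X_mean r_max s_ge1 alpha_gt0 step_le Th) _.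
have := tuned_rate_le K Rm s alpha _ K_gt0 Rm_ge0 s_ge1 (erefl alpha) (erefl _).
by rewrite -ThE lee_fin.
Qed.

Lemma min_gap_powR_ge1 {R : realType} {K : nat} (r : 'I_K -> R) (Rm Delta : R) :
  (forall a a' : 'I_K, a != a' -> r a != r a') -> (forall a, `|r a| <= Rm) ->
  is_min_gap r Delta -> 1 <= (2 * Rm) `^ (2 / 7) * Delta `^ (- (2 / 7)).
Proof.
move=> r_inj r_le [_ [a [a' [aa' DeltaE]]]].
have Delta_gt0 : 0 < Delta by rewrite DeltaE normr_gt0 subr_eq0 r_inj.
have Delta_le : Delta <= 2 * Rm.
  by rewrite DeltaE (le_trans (ler_normB _ _)) //; have := r_le a; have := r_le a'; lra.
rewrite powRN -[leLHS](divff (lt0r_neq0 (powR_gt0 (2 / 7) Delta_gt0))).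
by rewrite ler_wpM2r ?invr_ge0 ?powR_ge0 // ge0_ler_powR ?nnegrE //; lra.
Qed.

Theorem corollary5p6 (R : realType) (K : nat) (Rmax : R) :
  (2 <= K)%N -> 0 < Rmax ->
  exists (calpha ceta C : R), 0 < calpha /\ 0 < ceta /\ 0 < C /\
  forall (d : measure_display) (T : measurableType d) (P : probability T R)
    (X : 'I_K -> T -> R) (r : 'I_K -> R) (astar : 'I_K) (Delta : R),
    (forall a, measurable_fun setT (X a)) ->
    (forall a w, `|X a w| <= Rmax) ->
    (forall a, (\int[P]_w (X a w)%:E = (r a)%:E)%E) ->
    (forall a a' : 'I_K, a != a' -> r a != r a') ->
    (forall a, r a <= r astar) ->
    is_min_gap r Delta ->
    forall Th : nat, (1 <= Th)%N ->
    let alpha := calpha * (Th%:R `^ (- (3 / 7))) in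
    let eta := ceta * (Th%:R `^ (1 / 7)) in
    (exp_regret P X r astar alpha eta Th (fun _ => 0%R)
      <= (C * Delta `^ (- (2 / 7)) * Th%:R `^ (6 / 7))%:E)%E.
Proof.
move=> K_ge2 Rmax_gt0; have K_gt0 : (0 < K)%N by apply: leq_trans K_ge2.
have C0_gt0 := lbsgb_rate_const_gt0 K Rmax K_gt0 (ltW Rmax_gt0).
exists (2 * (Rmax + K%:R))^-1, 1, (lbsgb_rate_const K Rmax * (2 * Rmax) `^ (2 / 7)).
split; first by rewrite invr_gt0 mulr_gt0 // ltr_wpDr.
split; first exact: ltr01.
split; first by rewrite mulr_gt0 // powR_gt0 // mulr_gt0.
move=> d T P X r astar Delta X_meas X_le X_mean r_inj r_max gap Th Th_ge1 /=.
rewrite mul1r; apply: le_trans (exp_regret_tuned_le X_meas X_le X_mean r_max Th_ge1) _.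
rewrite lee_fin ler_wpM2r ?powR_ge0 // -mulrA ler_peMr ?(ltW C0_gt0) //.
exact: min_gap_powR_ge1 r_inj (mean_reward_norm_le X_meas X_le X_mean) gap.
Qed.
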